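(* Let $M$ be a unique expansion matroid on a finite set $E$ with $r(M)>0$, and let $B\subseteq E$. Then $B\in\mathcal{B}(M)$ if and only if $B\subseteq\cup\mathcal{B}(M)$ and $|B\cap D|=1$ for every $D\in F(M)$.
   Context: For a matroid $M$: $\mathcal{I}(M)$ its independent sets, $\mathcal{B}(M)$ its bases, $\cup\mathcal{B}(M)$ the union of all bases, $r(M)$ the size of a base, $r(X)$ the rank of $X\subseteq E$. $s(M)=\{A\in\mathcal{I}(M): |A|=r(M)-1\}$; $K_M(X)=\{a\in E: r(X\cup\{a\})=r(X)+1\}$; $F(M)=\{K_M(X): X\in s(M)\}$. $M$ is a unique expansion matroid if for every $B\in\mathcal{B}(M)$ and every $A\in s(M)$, whenever $e_1,e_2\in B$ satisfy $A\cup\{e_1\}\in\mathcal{B}(M)$ and $A\cup\{e_2\}\in\mathcal{B}(M)$, then $e_1=e_2$. *)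

From mathcomp Require Import all_boot.
Set Implicit Arguments. Unset Strict Implicit. Unset Printing Implicit Defensive.

(* A matroid on the finite ground set E = the finType T, given by its
   family of independent sets (axioms I1-I3). *)
Definition is_matroid (T : finType) (I : {set {set T}}) : Prop :=
  [/\ set0 \in I,
      (forall A B : {set T}, B \in I -> A \subset B -> A \in I) &
      (forall A B : {set T}, A \in I -> B \in I -> #|A| < #|B| ->
         exists2 e, e \in B :\: A & e |: A \in I)].

Section Matroid.
Variables (T : finType) (I : {set {set T}}).

Definition mrank (X : {set T}) : nat :=
  \max_(A in I | A \subset X) #|A|.

Definition rankM : nat := mrank setT.

Definition bases : {set {set T}} :=
  [set B in I | [forall A in I, (B \subset A) ==> (A == B)]].

Definition union_bases : {set T} := \bigcup_(B in bases) B.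

Definition sM : {set {set T}} := [set A in I | #|A| == rankM - 1].

Definition KM (X : {set T}) : {set T} :=
  [set a | mrank (a |: X) == (mrank X).+1].

Definition FM : {set {set T}} := [set KM X | X in sM].

Definition unique_expansion : Prop :=
  forall B A : {set T}, B \in bases -> A \in sM ->
  forall e1 e2 : T, e1 \in B -> e2 \in B ->
    e1 |: A \in bases -> e2 |: A \in bases -> e1 = e2.

End Matroid.

From mathcomp Require Import all_boot.
From mathcomp Require Import zify.
Set Implicit Arguments. Unset Strict Implicit. Unset Printing Implicit Defensive.

(* A base B meets K(X) exactly in the elements e with X + e a base; augmenting
   X from B gives one such e, and unique expansion says there is no other.
   Conversely, if B meets every K(X) then a maximal independent subset J of B
   is a base: otherwise extend J to a base Z, drop some f in Z - J and get an
   element of B that enlarges J inside B.  Finally an element b of B - J lies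
   in some base, so {b} extends by J to a base Z; then X = Z - b is an
   independent (r-1)-set inside J, and both b and any j in J - X lie in B and
   in K(X), contradicting |B n K(X)| = 1. *)

Section Matroid.
Variables (T : finType) (I : {set {set T}}).
Hypothesis matroidI : is_matroid I.

Lemma matroid_indep0 : set0 \in I.
Proof. by case: matroidI. Qed.

Lemma matroid_indep_subset (A B : {set T}) : B \in I -> A \subset B -> A \in I.
Proof. by case: matroidI => _ + _; apply. Qed.

Lemma matroid_augment (A B : {set T}) : A \in I -> B \in I -> #|A| < #|B| ->
  exists2 e, e \in B :\: A & e |: A \in I.
Proof. by case: matroidI => _ _; apply. Qed.

Lemma indep_card_le_mrank (Y A : {set T}) :
  A \in I -> A \subset Y -> #|A| <= mrank I Y.
Proof.
move=> AI AY.
by apply: (@leq_bigmax_cond _ (fun A => (A \in I) && (A \subset Y)) (fun A => #|A|)); rewrite AI.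
Qed.

Lemma mrank_le_card (Y : {set T}) : mrank I Y <= #|Y|.
Proof. by apply/bigmax_leqP => A /andP[_ /subset_leq_card]. Qed.

Lemma mrank_indep (Y : {set T}) : Y \in I -> mrank I Y = #|Y|.
Proof.
by move=> YI; apply/eqP; rewrite eqn_leq mrank_le_card indep_card_le_mrank.
Qed.

Lemma mrank_witness (Y : {set T}) :
  exists2 A, [/\ A \in I & A \subset Y] & mrank I Y = #|A|.
Proof.
have nonempty : 0 < #|[pred A : {set T} | (A \in I) && (A \subset Y)]|.
  by apply/card_gt0P; exists set0; rewrite inE matroid_indep0 sub0set.
have [A /andP[AI AY] maxA] := eq_bigmax_cond (fun A : {set T} => #|A|) nonempty.
by exists A; rewrite // /mrank maxA.
Qed.

Lemma indep_of_mrank_card (Y : {set T}) : mrank I Y = #|Y| -> Y \in I.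
Proof.
have [A [AI AY] ->] := mrank_witness Y => cardA.
suff /eqP <- : A == Y by [].
by rewrite eqEcard AY cardA leqnn.
Qed.

Lemma indep_card_le_rankM (A : {set T}) : A \in I -> #|A| <= rankM I.
Proof. by move=> AI; rewrite indep_card_le_mrank ?subsetT. Qed.

Lemma exists_indep_rankM : exists2 A, A \in I & #|A| = rankM I.
Proof. by rewrite /rankM; have [A [AI _] ->] := mrank_witness setT; exists A. Qed.

Lemma basesP (B : {set T}) : B \in bases I <-> B \in I /\ #|B| = rankM I.
Proof.
rewrite inE; split=> [/andP[BI /forall_inP maxB] | [BI cardB]].
  split=> //; apply/eqP; rewrite eqn_leq indep_card_le_rankM //= leqNgt.
  apply/negP => ltB; have [A AI cardA] := exists_indep_rankM.
  have [|e /setDP[_ eB] eBI] := matroid_augment BI AI; first by rewrite cardA.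
  have /implyP/(_ (subsetUr _ _))/eqP eBB := maxB _ eBI.
  by move: eB; rewrite -eBB setU11.
rewrite BI; apply/forall_inP => A AI; apply/implyP => BA.
by rewrite eq_sym eqEcard BA cardB indep_card_le_rankM.
Qed.

Lemma base_indep (B : {set T}) : B \in bases I -> B \in I.
Proof. by case/basesP. Qed.

Lemma base_card (B : {set T}) : B \in bases I -> #|B| = rankM I.
Proof. by case/basesP. Qed.

Lemma indep_extend (A C : {set T}) : A \in I -> C \in I -> #|A| <= #|C| ->
  exists Z, [/\ Z \in I, A \subset Z, Z \subset A :|: C & #|Z| = #|C|].
Proof.
move=> + CI; move gap: (#|C| - #|A|) => k.
elim: k A gap => [|k IHk] A gapA AI AC.
  by exists A; split; rewrite ?subsetUl //; lia.
have [e /setDP[eC eA] eAI] := matroid_augment AI CI (ltac:(lia) : #|A| < #|C|).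
have cardeA : #|e |: A| = #|A|.+1 by rewrite cardsU1 eA.
have [Z [ZI eAZ ZeAC cardZ]] := IHk (e |: A) ltac:(lia) eAI ltac:(lia).
exists Z; split=> //; first exact: subset_trans (subsetUr _ _) eAZ.
apply: subset_trans ZeAC _; apply/subsetP => x; rewrite !inE.
by case/orP=> [/orP[/eqP -> | ->] | ->]; rewrite ?eC ?orbT.
Qed.

Lemma indep_extend_base (A C : {set T}) : A \in I -> C \in bases I ->
  exists Z, [/\ Z \in bases I, A \subset Z & Z \subset A :|: C].
Proof.
move=> AI /basesP[CI cardC].
have [|Z [ZI AZ ZAC cardZ]] := indep_extend AI CI; first by rewrite cardC indep_card_le_rankM.
by exists Z; split=> //; apply/basesP; rewrite cardZ.
Qed.

Hypothesis rank_gt0 : 0 < rankM I.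

Lemma sM_card (X : {set T}) : X \in sM I -> #|X|.+1 = rankM I.
Proof. by rewrite inE => /andP[_ /eqP ->]; lia. Qed.

Lemma sM_indep (X : {set T}) : X \in sM I -> X \in I.
Proof. by rewrite inE => /andP[]. Qed.

Lemma base_setD1_sM (Z : {set T}) (z : T) :
  Z \in bases I -> z \in Z -> Z :\ z \in sM I.
Proof.
move=> /basesP[ZI cardZ] zZ; rewrite inE (matroid_indep_subset ZI (subD1set Z z)).
by have := cardsD1 z Z; rewrite zZ cardZ => ?; apply/eqP; lia.
Qed.

Lemma sM_expansion_base (X : {set T}) (e : T) :
  X \in sM I -> e \notin X -> e |: X \in I -> e |: X \in bases I.
Proof. by move=> /sM_card cardX eX eXI; apply/basesP; rewrite cardsU1 eX. Qed.

Lemma sM_expansion_notin (X : {set T}) (e : T) :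
  X \in sM I -> e |: X \in bases I -> e \notin X.
Proof.
move=> /sM_card cardX /basesP[_]; apply: contra_eqN => eX.
by rewrite (setUidPr _) ?sub1set // -cardX; lia.
Qed.

Lemma in_KM (X : {set T}) (a : T) :
  X \in sM I -> (a \in KM I X) = (a |: X \in bases I).
Proof.
move=> XsM; have cardX := sM_card XsM.
rewrite inE (mrank_indep (sM_indep XsM)); apply/eqP/idP => [rank_aX | aXB].
  have aX : a \notin X.
    apply/negP => aX; move: rank_aX.
    by rewrite (setUidPr _) ?sub1set // mrank_indep ?(sM_indep XsM) //; lia.
  apply: sM_expansion_base => //; apply: indep_of_mrank_card.
  by rewrite cardsU1 aX.
by rewrite mrank_indep ?base_indep // base_card.
Qed.

Lemma base_expansion (B X : {set T}) :
  B \in bases I -> X \in sM I -> exists2 e, e \in B & e |: X \in bases I.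
Proof.
move=> /basesP[BI cardB] XsM; have cardX := sM_card XsM.
have [|e /setDP[eB eX] eXI] := matroid_augment (sM_indep XsM) BI; first lia.
by exists e; last exact: sM_expansion_base.
Qed.

Lemma base_meet_FM (B D : {set T}) : unique_expansion I ->
  B \in bases I -> D \in FM I -> #|B :&: D| = 1.
Proof.
move=> uniqueI BB /imsetP[X XsM ->].
have [e eB eXB] := base_expansion BB XsM.
apply/eqP/cards1P; exists e; apply/setP => x; rewrite in_setI in_set1 in_KM //.
apply/andP/eqP => [[xB xXB] | ->]; last by [].
exact: uniqueI BB XsM x e xB eB xXB eXB.
Qed.

Lemma meet_KM_expansion (B X : {set T}) : X \in sM I -> #|B :&: KM I X| = 1 ->
  exists2 b, b \in B & b |: X \in bases I.
Proof.
move=> XsM /eqP/cards1P[b meetB].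
have /setIP[bB bK] : b \in B :&: KM I X by rewrite meetB set11.
by exists b; rewrite -?in_KM.
Qed.

Lemma meet_KM_unique (B X : {set T}) (b1 b2 : T) :
  X \in sM I -> #|B :&: KM I X| = 1 -> b1 \in B -> b2 \in B ->
  b1 |: X \in bases I -> b2 |: X \in bases I -> b1 = b2.
Proof.
move=> XsM /eqP/cards1P[b meetB] b1B b2B b1XB b2XB.
have : b1 \in B :&: KM I X by rewrite inE b1B in_KM.
have : b2 \in B :&: KM I X by rewrite inE b2B in_KM.
by rewrite meetB => /set1P -> /set1P ->.
Qed.

Lemma exists_base_sub (B : {set T}) :
  (forall X, X \in sM I -> exists2 b, b \in B & b |: X \in bases I) ->
  exists2 J, J \in bases I & J \subset B.
Proof.
move=> expandB; have [J [JI JB] rankB] := mrank_witness B.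
exists J => //; apply/basesP; split=> //; apply/eqP.
rewrite eqn_leq indep_card_le_rankM //= leqNgt; apply/negP => ltJ.
have [B0 B0I cardB0] := exists_indep_rankM.
have B0B : B0 \in bases I by apply/basesP.
have [Z [ZB JZ _]] := indep_extend_base JI B0B.
have cardZ := base_card ZB.
have /card_gt0P[f /setDP[fZ fJ]] : 0 < #|Z :\: J|.
  by rewrite cardsD (setIidPr JZ); lia.
have XsM := base_setD1_sM ZB fZ.
have [b bB bXB] := expandB _ XsM.
have JX : J \subset Z :\ f by rewrite subsetD1 JZ fJ.
have bJ : b \notin J.
  by apply: contraNN (sM_expansion_notin XsM bXB); apply: (subsetP JX).
have bJI : b |: J \in I.
  by apply: matroid_indep_subset (base_indep bXB) _; rewrite setUS.
have bJB : b |: J \subset B by rewrite subUset sub1set bB JB.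
by have := indep_card_le_mrank bJI bJB; rewrite rankB cardsU1 bJ ltnn.
Qed.

Lemma subset_base_of_unique_expansions (B J : {set T}) :
  B \subset union_bases I -> J \in bases I -> J \subset B ->
  (forall X b1 b2, X \in sM I -> b1 \in B -> b2 \in B ->
     b1 |: X \in bases I -> b2 |: X \in bases I -> b1 = b2) ->
  B \subset J.
Proof.
move=> Bunion JB JsubB uniqueB; apply/subsetP => b bB; apply: contraT => bJ.
have /bigcupP[Bb BbB bBb] := subsetP Bunion _ bB.
have bI : [set b] \in I.
  by apply: matroid_indep_subset (base_indep BbB) _; rewrite sub1set.
have [Z [ZB bZ ZbJ]] := indep_extend_base bI JB; rewrite sub1set in bZ.
have XsM := base_setD1_sM ZB bZ; have cardX := sM_card XsM.
have XJ : Z :\ b \subset J.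
  apply/subsetP => x /setD1P[xb /(subsetP ZbJ)].
  by rewrite !inE (negbTE xb).
have /card_gt0P[j /setDP[jJ jX]] : 0 < #|J :\: (Z :\ b)|.
  by rewrite cardsD (setIidPr XJ) (base_card JB); lia.
have jXB : j |: (Z :\ b) \in bases I.
  apply: sM_expansion_base => //; apply: matroid_indep_subset (base_indep JB) _.
  by rewrite subUset sub1set jJ XJ.
have bXB : b |: (Z :\ b) \in bases I by rewrite setD1K.
have jb := uniqueB _ _ _ XsM (subsetP JsubB _ jJ) bB jXB bXB.
by move: bJ; rewrite -jb jJ.
Qed.

End Matroid.

Theorem proposition7 (T : finType) (I : {set {set T}}) (B : {set T}) :
  is_matroid I -> unique_expansion I -> 0 < rankM I ->
  (B \in bases I <->
   (B \subset union_bases I /\ forall D, D \in FM I -> #|B :&: D| = 1)).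
Proof.
move=> matroidI uniqueI rank_gt0; split=> [BB | [Bunion meetB]].
  split; first exact: bigcup_sup BB.
  by move=> D; apply: base_meet_FM.
have meetKM X : X \in sM I -> #|B :&: KM I X| = 1.
  by move=> XsM; apply: meetB; apply: imset_f.
have [J JB JsubB] := exists_base_sub matroidI rank_gt0
  (fun X XsM => meet_KM_expansion matroidI rank_gt0 XsM (meetKM X XsM)).
suff -> : B = J by [].
apply/eqP; rewrite eqEsubset JsubB andbT.
apply: (subset_base_of_unique_expansions matroidI rank_gt0 Bunion JB JsubB).
by move=> X b1 b2 XsM; apply: meet_KM_unique (meetKM X XsM).
Qed.
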